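(* Let $\rho=(\rho_1,\dots,\rho_s)$ be a composition of $n$ with exactly $r$ nonzero entries. Then: (a) There are exactly $r$ boxes of $\rho$ which can contain $n$ in a row-strict filling of $\rho$ (namely, the far-right boxes of the nonzero rows, each of which does occur). (b) If $T$ is a row-strict filling of $\rho$ and $n$ lies in the far-right box whose dimension-order label is $i\in\{1,\dots,r\}$, then $|D^T_n|=i-1$.
   Context: A composition $\rho=(\rho_1,\dots,\rho_s)$ of $n$ is a finite sequence of nonnegative integers summing to $n$; its diagram has $\rho_i$ boxes in row $i$ (rows numbered top to bottom) in columns $1,\dots,\rho_i$ (columns numbered left to right). A filling places $1,\dots,n$ bijectively into the boxes; it is row-strict if entries increase left to right in each row. Dimension-ordering: the far-right box of each nonzero row $i$ (the box in column $\rho_i$) gets a label in $\{1,\dots,r\}$ by ordering these $r$ boxes first by column, from the rightmost column to the leftmost, and within a single column from top to bottom; the $k$-th box in this order gets label $k$. Dimension pairs (with Hessenberg function $h(j)=j$): for a filling $T$, a pair $(a,b)$ of entries is a dimension pair if (1) $b>a$; (2) either $b$ lies in the same column as $a$ strictly below it, or $b$ lies in a column strictly to the left of the column of $a$; (3) if there is a box immediately to the right of $a$ in its row, containing $c$, then $b\le c$. For $j\in\{2,\dots,n\}$, $D^T_j$ denotes the set of dimension pairs of $T$ of the form $(a,j)$. *)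

From mathcomp Require Import all_boot.
Set Implicit Arguments. Unset Strict Implicit. Unset Printing Implicit Defensive.

(* Conventions: rows and columns are 0-indexed; a box is a pair (row, column). *)

Definition boxes (sh : seq nat) : seq (nat * nat) :=
  flatten [seq [seq (i, j) | j <- iota 0 (nth 0 sh i)] | i <- iota 0 (size sh)].

Definition entry (T : seq (seq nat)) (p : nat * nat) : nat :=
  nth 0 (nth [::] T p.1) p.2.

Definition is_filling (rho : seq nat) (n : nat) (T : seq (seq nat)) : bool :=
  (map size T == rho) && perm_eq (flatten T) (iota 1 n).

Definition row_strict (T : seq (seq nat)) : bool := all (sorted ltn) T.

Definition farright (rho : seq nat) : seq (nat * nat) :=
  [seq (i, (nth 0 rho i).-1) | i <- iota 0 (size rho) & 0 < nth 0 rho i].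

(* dimension order: rightmost column first, within a column top to bottom *)
Definition dim_rel (p q : nat * nat) : bool :=
  (q.2 < p.2) || ((p.2 == q.2) && (p.1 <= q.1)).

Definition dim_label (rho : seq nat) (p : nat * nat) : nat :=
  (index p (sort dim_rel (farright rho))).+1.

(* (a,b) is a dimension pair of T (Hessenberg function h(j) = j) *)
Definition dim_pair (T : seq (seq nat)) (a b : nat) : bool :=
  has (fun pa =>
    has (fun pb =>
      [&& entry T pa == a, entry T pb == b, a < b,
          ((pb.2 == pa.2) && (pa.1 < pb.1)) || (pb.2 < pa.2)
        & (pa.2.+1 < size (nth [::] T pa.1)) ==> (b <= entry T (pa.1, pa.2.+1))])
      (boxes (map size T)))
    (boxes (map size T)).

Definition D_card (n : nat) (T : seq (seq nat)) (j : nat) : nat :=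
  count (fun a => dim_pair T a j) (iota 1 n).

From mathcomp Require Import all_boot zify.
Set Implicit Arguments. Unset Strict Implicit. Unset Printing Implicit Defensive.

(* (a) Row strictness forces n to the end of its row, and filling the rows
   with consecutive blocks of integers, the chosen row receiving the last
   block, puts n at the end of any nonzero row.
   (b) As n is maximal, condition (3) rules out every a whose right
   neighbour exists: that neighbour would have to be n itself, which is in
   the column just right of a, violating (2).  So the a's of D_n are the
   entries of the other far-right boxes, and on far-right boxes condition (2)
   is exactly "precedes the box of n in dimension order". *)

Lemma mem_boxes sh p : (p \in boxes sh) = (p.1 < size sh) && (p.2 < nth 0 sh p.1).
Proof.
case: p => i j /=; apply/flatten_mapP/andP => [[k]|[Hi Hj]].
  rewrite mem_iota add0n => /= Hk /mapP[j' Hj' [-> ->]].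
  by move: Hj'; rewrite mem_iota add0n Hk.
exists i; first by rewrite mem_iota.
by apply/mapP; exists j; rewrite ?mem_iota.
Qed.

Lemma mem_farright sh p : (p \in farright sh) =
  [&& p.1 < size sh, 0 < nth 0 sh p.1 & p.2 == (nth 0 sh p.1).-1].
Proof.
case: p => i j /=; apply/mapP/and3P => [[k]|[Hi Hx /eqP Hj]].
  by rewrite mem_filter mem_iota add0n => /andP[Hx /andP[_ Hk]] [-> ->]; rewrite Hk Hx.
by exists i; [rewrite mem_filter mem_iota Hi Hx | rewrite Hj].
Qed.

Lemma farright_boxes sh p : p \in farright sh -> p \in boxes sh.
Proof. by rewrite mem_farright mem_boxes; lia. Qed.

Lemma boxes_right_neighbour sh i j :
  (i, j) \in boxes sh -> (i, j) \notin farright sh -> (i, j.+1) \in boxes sh.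
Proof. by rewrite !mem_boxes mem_farright /=; lia. Qed.

Lemma uniq_farright sh : uniq (farright sh).
Proof.
rewrite map_inj_in_uniq ?filter_uniq ?iota_uniq //.
by move=> a b _ _ [].
Qed.

Lemma size_farright sh : size (farright sh) = count (fun x => 0 < x) sh.
Proof. by rewrite size_map size_filter -{3}(mkseq_nth 0 sh) count_map. Qed.

Lemma size_nth_row (T : seq (seq nat)) i : size (nth [::] T i) = nth 0 (map size T) i.
Proof. by elim: T i => [|r T IH] [|i] //=. Qed.

Lemma row_strict_entry_lt T i j : row_strict T ->
  j.+1 < size (nth [::] T i) -> entry T (i, j) < entry T (i, j.+1).
Proof.
move=> HT Hj.
have Hi : i < size T.
  by rewrite ltnNge; apply/negP => /(nth_default [::]) E; rewrite E in Hj.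
have Hrow : sorted ltn (nth [::] T i) by apply: (allP HT); apply: mem_nth.
by apply: (sorted_ltn_nth ltn_trans) => //; rewrite inE ltnW.
Qed.

Section Filling.
Variables (rho : seq nat) (n : nat) (T : seq (seq nat)).
Hypothesis fillT : is_filling rho n T.

Lemma filling_shape : map size T = rho.
Proof. by case/andP: fillT => /eqP. Qed.

Lemma filling_perm : perm_eq (flatten T) (iota 1 n).
Proof. by case/andP: fillT. Qed.

Lemma filling_size_row i : size (nth [::] T i) = nth 0 rho i.
Proof. by rewrite size_nth_row filling_shape. Qed.

Lemma entry_flatten i j : j < nth 0 rho i ->
  entry T (i, j) = nth 0 (flatten T) (flatten_index (shape T) i j).
Proof.
move=> Hj; have Hs : shape T = rho by rewrite /shape filling_shape.
by rewrite nth_flatten Hs flatten_indexKl // flatten_indexKr.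
Qed.

Lemma entry_range p : p \in boxes rho -> 0 < entry T p <= n.
Proof.
case: p => i j; rewrite mem_boxes /= => /andP[Hi Hj].
have Hsz : size T = size rho by rewrite -filling_shape size_map.
have Hin : entry T (i, j) \in flatten T.
  apply/flattenP; exists (nth [::] T i); first by rewrite mem_nth ?Hsz.
  by rewrite mem_nth ?filling_size_row.
by move: Hin; rewrite (perm_mem filling_perm) mem_iota add1n ltnS.
Qed.

Lemma entry_inj : {in boxes rho &, injective (entry T)}.
Proof.
case=> i j [i' j']; rewrite !mem_boxes /= => /andP[_ Hj] /andP[_ Hj'].
rewrite !entry_flatten //.
have Hs : shape T = rho by rewrite /shape filling_shape.
have Hu : uniq (flatten T) by rewrite (perm_uniq filling_perm) iota_uniq.
have Hsz : size (flatten T) = sumn rho by rewrite size_flatten Hs.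
move/eqP; rewrite nth_uniq ?Hsz ?Hs ?flatten_indexP // => /eqP E.
have := flatten_indexKl Hj; have := flatten_indexKr Hj.
by rewrite E flatten_indexKl // flatten_indexKr // => -> ->.
Qed.

Lemma entry_max_farright p : row_strict T ->
  p \in boxes rho -> entry T p = n -> p \in farright rho.
Proof.
case: p => i j HS Hp Hn; apply/negPn/negP => Hnot.
have Hq := boxes_right_neighbour Hp Hnot.
have Hq_row : j.+1 < nth 0 rho i by move: (Hq); rewrite mem_boxes => /andP[].
have /andP[_ Hq_le] := entry_range Hq.
have Hlt : entry T (i, j) < entry T (i, j.+1).
  by apply: row_strict_entry_lt; rewrite ?filling_size_row.
by move: (leq_trans Hlt Hq_le); rewrite Hn ltnn.
Qed.

End Filling.

Fixpoint consecutive_filling (c : nat) (sh : seq nat) : seq (seq nat) :=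
  if sh is k :: sh' then iota c k :: consecutive_filling (c + k) sh' else [::].

Lemma consecutive_filling_shape c sh : map size (consecutive_filling c sh) = sh.
Proof. by elim: sh c => [|k sh IH] c //=; rewrite size_iota IH. Qed.

Lemma consecutive_filling_flatten c sh :
  flatten (consecutive_filling c sh) = iota c (sumn sh).
Proof. by elim: sh c => [|k sh IH] c //=; rewrite IH iotaD. Qed.

Lemma consecutive_filling_row_strict c sh : row_strict (consecutive_filling c sh).
Proof. by elim: sh c => [|k sh IH] c //=; rewrite iota_ltn_sorted IH. Qed.

Lemma exists_filling_max_at_row_end A x B : 0 < x ->
  let rho := A ++ x :: B in
  exists T, [/\ is_filling rho (sumn rho) T, row_strict T
             & entry T (size A, x.-1) = sumn rho].
Proof.
move=> Hx rho; set sA := sumn A; set sB := sumn B.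
have sum_rho : sumn rho = sA + x + sB by rewrite sumn_cat /= addnA.
exists (consecutive_filling 1 A ++
        iota (1 + sA + sB) x :: consecutive_filling (1 + sA) B); split.
- rewrite /is_filling map_cat /= !consecutive_filling_shape size_iota eqxx /=.
  rewrite flatten_cat /= !consecutive_filling_flatten sum_rho -/sA -/sB.
  by rewrite [sA + x + sB]addnAC !iotaD addnA -catA perm_cat2l perm_catC.
- have := consecutive_filling_row_strict; rewrite /row_strict => strictC.
  by rewrite all_cat /= !strictC iota_ltn_sorted.
have sizeA : size (consecutive_filling 1 A) = size A.
  by rewrite -(size_map size) consecutive_filling_shape.
rewrite /entry nth_cat sizeA ltnn subnn /= nth_iota ?prednK // sum_rho.
by lia.
Qed.

Lemma farright_filling_max rho p : p \in farright rho ->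
  exists T, [/\ is_filling rho (sumn rho) T, row_strict T & entry T p = sumn rho].
Proof.
case: p => i j; rewrite mem_farright /= => /and3P[Hi Hx /eqP ->].
have Erho : take i rho ++ nth 0 rho i :: drop i.+1 rho = rho.
  by rewrite -(drop_nth 0 Hi) cat_take_drop.
have := exists_filling_max_at_row_end (take i rho) (drop i.+1 rho) Hx.
by rewrite /= Erho size_takel // ltnW.
Qed.

Lemma dim_rel_trans : transitive dim_rel.
Proof. by move=> [? ?] [? ?] [? ?]; rewrite /dim_rel /=; lia. Qed.

Lemma dim_rel_anti : antisymmetric dim_rel.
Proof.
move=> [a b] [a' b']; rewrite /dim_rel /= => H.
by have [-> ->] : a = a' /\ b = b' by lia.
Qed.

Lemma dim_rel_total : total dim_rel.
Proof. by move=> [? ?] [? ?]; rewrite /dim_rel /=; lia. Qed.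

Lemma count_mem_subset (X : eqType) (s S : seq X) : uniq s -> uniq S ->
  {subset S <= s} -> count (mem S) s = size S.
Proof.
move=> Us US sub_S_s; rewrite -size_filter; apply: perm_size.
apply: uniq_perm; rewrite ?filter_uniq // => x.
by rewrite mem_filter; apply/andP/idP => [[]//|Sx]; split; rewrite ?sub_S_s.
Qed.

Lemma count_predecessors_sorted (X : eqType) (e : rel X) (s : seq X) x :
  transitive e -> antisymmetric e -> uniq s -> sorted e s -> x \in s ->
  count (fun y => (y != x) && e y x) s = index x s.
Proof.
move=> e_tr e_anti Us Ss xs.
have Hi : index x s <= size s by rewrite ltnW ?index_mem.
rewrite -(size_takel Hi) -(count_mem_subset Us) ?take_uniq //; last first.
  by move=> y; apply: mem_take.
apply: eq_in_count => y ys /=; rewrite in_take_leq //.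
case: (ltngtP (index y s) (index x s)) => H.
- rewrite (sorted_ltn_index e_tr Ss y x ys xs H) andbT.
  by apply: contraTneq H => ->; rewrite ltnn.
- apply/negP => /andP[Hne eyx].
  have exy := sorted_ltn_index e_tr Ss x y xs ys H.
  by move: Hne; rewrite (e_anti _ _ (andb_true_intro (conj eyx exy))) eqxx.
- by rewrite -(nth_index x ys) H nth_index // eqxx.
Qed.

Section DimensionPairsOfMax.
Variables (rho : seq nat) (n : nat) (T : seq (seq nat)) (p : nat * nat).
Hypothesis fillT : is_filling rho n T.
Hypothesis p_farright : p \in farright rho.
Hypothesis Tp : entry T p = n.

Definition farright_before := [seq q <- farright rho | (q != p) && dim_rel q p].

Let p_box : p \in boxes rho := farright_boxes p_farright.

Lemma dim_pair_max_farright a : dim_pair T a n -> a \in map (entry T) farright_before.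
Proof.
rewrite /dim_pair (filling_shape fillT) => /hasP[[i j] pa_box /hasP[pb pb_box]].
case/and5P => /eqP Ta /eqP Tb a_lt Hcol Hright.
have Epb : pb = p by apply: (entry_inj fillT) => //; rewrite Tb Tp.
subst pb.
have pa_ne_p : (i, j) != p by apply: contraTneq a_lt => E; rewrite -Ta E Tp ltnn.
have pa_before_p : dim_rel (i, j) p by move: Hcol; rewrite /dim_rel; lia.
apply/mapP; exists (i, j) => //; rewrite mem_filter pa_ne_p pa_before_p /=.
apply/negPn/negP => Hnot.
have Hq := boxes_right_neighbour pa_box Hnot.
have Hq_row : j.+1 < nth 0 rho i by move: (Hq); rewrite mem_boxes => /andP[].
move: Hright; rewrite (filling_size_row fillT) Hq_row /= => Hge.
have /andP[_ Hle] := entry_range fillT Hq.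
have Eq : (i, j.+1) = p.
  by apply: (entry_inj fillT) => //; rewrite Tp; apply/eqP; rewrite eqn_leq Hle.
by move: Hcol; rewrite -Eq /= ltnn andbF ltnNge leqnSn.
Qed.

Lemma farright_dim_pair_max q : q \in farright_before -> dim_pair T (entry T q) n.
Proof.
rewrite mem_filter => /andP[/andP[Hqp Hrel] q_farright].
have q_box := farright_boxes q_farright.
rewrite /dim_pair (filling_shape fillT); apply/hasP; exists q => //.
apply/hasP; exists p => //; rewrite eqxx Tp eqxx /=.
have /andP[_ Hle] := entry_range fillT q_box.
have Tq_ne : entry T q != n.
  by apply: contra Hqp => /eqP E; rewrite (entry_inj fillT q_box p_box) ?E ?Tp.
rewrite ltn_neqAle Tq_ne Hle /=; apply/andP; split.
- move: Hrel Hqp; case: q {q_box Hle Tq_ne q_farright} => a b; case: p => a' b'.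
  by rewrite /dim_rel /= xpair_eqE; lia.
- move: q_farright; case: q {q_box Hle Hqp Hrel Tq_ne} => i j; rewrite mem_farright /=.
  by case/and3P => _ Hx /eqP ->; rewrite (filling_size_row fillT) prednK // ltnn.
Qed.

Lemma D_card_max : D_card n T n = size farright_before.
Proof.
rewrite /D_card (eq_in_count (a2 := mem (map (entry T) farright_before))); last first.
  move=> a _; apply/idP/idP; first exact: dim_pair_max_farright.
  by case/mapP=> q Hq ->; apply: farright_dim_pair_max.
rewrite count_mem_subset ?iota_uniq ?size_map //.
- rewrite map_inj_in_uniq ?filter_uniq ?uniq_farright //.
  move=> x y; rewrite !mem_filter => /andP[_ Hx] /andP[_ Hy].
  by apply: (entry_inj fillT); apply: farright_boxes.
- move=> a /mapP[q]; rewrite mem_filter => /andP[_ Hq] ->.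
  have /andP[H0 H1] := entry_range fillT (farright_boxes Hq).
  by rewrite mem_iota H0 add1n ltnS.
Qed.

Lemma size_farright_before : size farright_before = (dim_label rho p).-1.
Proof.
rewrite size_filter /dim_label /=.
have /permP <- : perm_eq (sort dim_rel (farright rho)) (farright rho).
  by rewrite perm_sort.
apply: count_predecessors_sorted.
- exact: dim_rel_trans.
- exact: dim_rel_anti.
- by rewrite sort_uniq uniq_farright.
- exact: sort_sorted dim_rel_total _.
- by rewrite mem_sort.
Qed.

End DimensionPairsOfMax.

Theorem mainTheorem2 (n : nat) (rho : seq nat) (r : nat) :
  sumn rho = n -> r = count (fun x => 0 < x) rho ->
  (* (a) *)
  ((forall p, p \in boxes rho ->
      ((exists T, [/\ is_filling rho n T, row_strict T & entry T p = n])
       <-> p \in farright rho))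
   /\ uniq (farright rho) /\ size (farright rho) = r)
  /\
  (* (b) *)
  (forall T, is_filling rho n T -> row_strict T ->
   forall p, p \in farright rho -> entry T p = n ->
   D_card n T n = (dim_label rho p).-1).
Proof.
move=> <- ->; split; [split; [|split] |].
- move=> p p_box; split => [[T [fillT HS Tp]] | ]; last exact: farright_filling_max.
  exact: entry_max_farright fillT p HS p_box Tp.
- exact: uniq_farright.
- exact: size_farright.
- move=> T fillT _ p p_farright Tp.
  by rewrite (D_card_max fillT p_farright Tp) size_farright_before.
Qed.
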